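(* Assume $S\times M\neq\emptyset$, let $(x,\lambda):[t_0,+\infty[\ \to X\times Y$ be a solution of (AHT), for each $t\ge t_0$ let $(x_t,\lambda_t)$ be the unique zero of $T_t=T+\varepsilon(t)\mathrm{id}$, and suppose there exists $t_+\ge t_0$ such that $\varepsilon^2(t)+\dot\varepsilon(t)\ge0$ and $2\varepsilon(t)\dot\varepsilon(t)+\ddot\varepsilon(t)\le0$ for all $t\ge t_+$. Then, as $t\to+\infty$, \[ \|(\dot x(t),\dot\lambda(t))+\varepsilon(t)((x(t),\lambda(t))-(x_t,\lambda_t))\|^2=\mathcal{O}\big(e^{-2\rho(t)}+\varepsilon^2(t)\big),\qquad \|T(x(t),\lambda(t))-T(x_t,\lambda_t)\|^2=\mathcal{O}\big(e^{-2\rho(t)}+\varepsilon^2(t)\big). \]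
   Context: $X,Y$ are real Hilbert spaces; $X\times Y$ carries the product inner product and norm $\|\cdot\|$. Standing assumptions: $f:X\to\mathbb{R}$ is convex and continuously differentiable with $\nabla f$ Lipschitz continuous on bounded subsets of $X$; $A:X\to Y$ is linear and continuous with adjoint $A^*$; $b\in Y$; $\varepsilon:[t_0,+\infty[\ \to\ ]0,+\infty[$ ($t_0\ge0$) is twice continuously differentiable with $\lim_{t\to+\infty}\varepsilon(t)=0$. $L(x,\lambda)=f(x)+\langle\lambda,Ax-b\rangle_Y$ and $T(x,\lambda)=(\nabla f(x)+A^*\lambda,\ b-Ax)$ (a monotone operator). $S$ is the set of optimal solutions of $\min\{f(x):Ax=b\}$, $M$ the set of Lagrange multipliers; $S\times M$ is the set of saddle points of $L$, equal to the zero set of $T$. The operator $T_t=T+\varepsilon(t)\mathrm{id}$ is $\varepsilon(t)$-strongly monotone and has a unique zero $(x_t,\lambda_t)$ (the saddle point of $L(x,\lambda)+\frac{\varepsilon(t)}{2}(\|x\|^2-\|\lambda\|^2)$). $\rho(t)=\int_{t_0}^t\varepsilon(\tau)\,d\tau$. (AHT) is the system $\dot x+\nabla f(x)+A^*\lambda+\varepsilon(t)x=0$, $\dot\lambda+b-Ax+\varepsilon(t)\lambda=0$; a solution is a continuously differentiable $(x,\lambda):[t_0,+\infty[\ \to X\times Y$ satisfying it on $[t_0,+\infty[$ (existence and uniqueness for every initial datum is assumed). *)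

From HB Require Import structures.
From mathcomp Require Import all_boot all_order all_algebra.
From mathcomp Require Import all_classical all_reals all_analysis.
Set Implicit Arguments. Unset Strict Implicit. Unset Printing Implicit Defensive.
Import Order.TTheory GRing.Theory Num.Theory.
Import numFieldNormedType.Exports.
Local Open Scope classical_set_scope.
Local Open Scope ring_scope.

(* Together with completeness of V this makes V a real Hilbert space. *)
Definition is_inner_product (R : realType) (V : normedModType R)
  (ip : V -> V -> R) : Prop :=
  (forall x y : V, ip x y = ip y x) /\
  (forall (a : R) (x y z : V), ip (a *: x + y) z = a * ip x z + ip y z) /\
  (forall x : V, `|x| ^+ 2 = ip x x).

(* Squared norm in X x Y for the product inner product. *)
Definition sqnorm2 (R : realType) (X Y : normedModType R) (u : X) (v : Y) : R :=
  `|u| ^+ 2 + `|v| ^+ 2.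

Definition lagrangian (R : realType) (X Y : normedModType R)
  (ipY : Y -> Y -> R) (f : X -> R) (A : X -> Y) (b : Y) (x : X) (l : Y) : R :=
  f x + ipY l (A x - b).

Definition saddle_point (R : realType) (X Y : normedModType R)
  (L : X -> Y -> R) (xs : X) (ls : Y) : Prop :=
  forall (x : X) (l : Y), L xs l <= L xs ls /\ L xs ls <= L x ls.

(* Components of the operator T(x,l) = (grad f x + A^* l, b - A x). *)
Definition T1 (R : realType) (X Y : normedModType R)
  (gf : X -> X) (As : Y -> X) (x : X) (l : Y) : X := gf x + As l.
Definition T2 (R : realType) (X Y : normedModType R)
  (A : X -> Y) (b : Y) (x : X) : Y := b - A x.

(* f = O(g) as t -> +oo (the unfolding of MathComp-Analysis' bigO with the
   filter +oo on R, which has no canonical filter_on instance usable by the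
   =O_ notation). *)
Definition bigO_pinfty (R : realType) (f g : R -> R) : Prop :=
  exists k : R, \forall t \near +oo, `|f t| <= k * `|g t|.

From HB Require Import structures.
From mathcomp Require Import all_boot all_order all_algebra.
From mathcomp Require Import all_classical all_reals all_analysis.
From mathcomp Require Import ring lra.
Import Order.TTheory GRing.Theory Num.Theory.
Import numFieldNormedType.Exports.
Local Open Scope classical_set_scope.
Local Open Scope ring_scope.
Set Implicit Arguments. Unset Strict Implicit.

(* Write z = (x, l) and F_e z = -(T z + e z), so that (AHT) reads z' = F_eps(t) z.
   Monotonicity of T gives, for all e, e', z, w,
     <F_e z - F_e' w, z - w> <= -(e + e')/2 |z - w|^2 - (e - e')/2 (|z|^2 - |w|^2).
   Against a zero z* of T this bounds the trajectory and gives |z_t| <= |z*|.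
   Against the shifted trajectory z(. + h) it shows that
     E_h(s) = |z(s + h) - z(s)|^2 + (eps(s + h) - eps(s)) \int_s^(s+h) |z|^2
   satisfies E_h' + (eps(s) + eps(s + h)) E_h <= 0 as long as eps' + eps^2 is
   nonincreasing, so E_h(s) P(s) P(s + h) decreases, where P = exp rho.  Since
   P eps is nondecreasing (eps' + eps^2 >= 0), E_h(t) <= K h^2 eps(t)^2, and
   h -> 0 gives |z'(t)| = O(eps(t)).  Hence z' + eps (z - z_t) = -(T z - T z_t)
   is O(eps): its square is O(eps^2), stronger than the claimed O(e^(-2 rho) + eps^2). *)

Section InnerProduct.
Variables (R : realType) (V : normedModType R) (ip : V -> V -> R).
Hypothesis hip : is_inner_product ip.

Lemma ipC x y : ip x y = ip y x. Proof. by case: hip. Qed.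

Lemma ipvv x : ip x x = `|x| ^+ 2. Proof. by case: hip => _ [] _ ->. Qed.

Lemma ip0l z : ip 0 z = 0.
Proof.
have [_ [+ _]] := hip => /(_ 1 0 0 z); rewrite scaler0 addr0 mul1r; lra.
Qed.

Lemma ipZl a x z : ip (a *: x) z = a * ip x z.
Proof. by have [_ [+ _]] := hip => /(_ a x 0 z); rewrite !addr0 ip0l addr0. Qed.

Lemma ipDl x y z : ip (x + y) z = ip x z + ip y z.
Proof. by have [_ [+ _]] := hip => /(_ 1 x y z); rewrite scale1r mul1r. Qed.

Lemma ipNl x z : ip (- x) z = - ip x z.
Proof. by rewrite -scaleN1r ipZl mulN1r. Qed.

Lemma ipBl x y z : ip (x - y) z = ip x z - ip y z.
Proof. by rewrite ipDl ipNl. Qed.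

Lemma ipZr a x z : ip z (a *: x) = a * ip z x.
Proof. by rewrite ipC ipZl ipC. Qed.

Lemma ipDr x y z : ip z (x + y) = ip z x + ip z y.
Proof. by rewrite ipC ipDl !(ipC z). Qed.

Lemma ipBr x y z : ip z (x - y) = ip z x - ip z y.
Proof. by rewrite ipC ipBl !(ipC z). Qed.

Lemma sqr_normD x y : `|x + y| ^+ 2 = `|x| ^+ 2 + 2 * ip x y + `|y| ^+ 2.
Proof. by rewrite -!ipvv ipDl !ipDr (ipC y x); ring. Qed.

Lemma sqr_normB x y : `|x - y| ^+ 2 = `|x| ^+ 2 - 2 * ip x y + `|y| ^+ 2.
Proof. by rewrite -!ipvv ipBl !ipBr (ipC y x); ring. Qed.

Lemma ip_polarization x y : ip x y = (`|x + y| ^+ 2 - `|x - y| ^+ 2) / 4.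
Proof. by rewrite sqr_normD sqr_normB; field. Qed.

Lemma ip_le_sqr_norm x y : 2 * ip x y <= `|x| ^+ 2 + `|y| ^+ 2.
Proof. by have := sqr_normB x y; have := sqr_ge0 (`|x - y| : R); lra. Qed.

Lemma sqr_normD_le (x y : V) : `|x + y| ^+ 2 <= 2 * `|x| ^+ 2 + 2 * `|y| ^+ 2.
Proof. by have := ip_le_sqr_norm x y; rewrite sqr_normD; lra. Qed.

Lemma ip_scale_diff (a c : R) x y :
  ip (a *: x - c *: y) (x - y)
  = (a + c) / 2 * `|x - y| ^+ 2 + (a - c) / 2 * (`|x| ^+ 2 - `|y| ^+ 2).
Proof.
by rewrite sqr_normB -!ipvv ipBl !ipBr !ipZl (ipC y x); field.
Qed.

End InnerProduct.

Section DifferenceQuotient.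
Variables (R : realType) (V : normedModType R).

Lemma is_deriveP (f : R -> V) (t : R) (d : V) :
  is_derive t 1 f d <-> (fun h => h^-1 *: (f (t + h) - f t)) @ 0^' --> d.
Proof.
have E : (fun h : R => h^-1 *: ((f \o shift t) (h *: 1) - f t)) =
         (fun h => h^-1 *: (f (t + h) - f t)).
  by apply/funext => h /=; rewrite [h *: 1]mulr1 [h + t]addrC.
split => [[df <-]|H].
  by move: df; rewrite /derivable /derive E.
split; first by apply/cvg_ex; exists d; rewrite /= E.
by rewrite /derive E; apply: cvg_lim.
Qed.

Lemma is_derive_translate (f : R -> V) (t h : R) (d : V) :
  is_derive (t + h) 1 f d -> is_derive t 1 (fun s => f (s + h)) d.
Proof.
move=> /is_deriveP H; apply/is_deriveP.
by under eq_fun => k do rewrite addrAC.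
Qed.

Lemma continuous_at_shift (f : R -> V) (t : R) :
  {for t, continuous f} -> (fun h => f (t + h)) @ 0^' --> f t.
Proof.
move=> cf; apply: (continuous_cvg _ cf).
rewrite -[X in _ --> X]addr0; apply: cvgD; first exact: cvg_cst.
exact: cvg_within.
Qed.

Lemma derivable1_is_derive (f : R -> V) (t : R) :
  derivable f t 1 -> is_derive t 1 f (derive1 f t).
Proof. by rewrite derive1E; exact: derivableP. Qed.

End DifferenceQuotient.

Section RealCalculus.
Variable R : realType.

Lemma within_segment_continuous (V : topologicalType) (f : R -> V) (a b : R) :
  (forall u, a <= u <= b -> {for u, continuous f}) -> {within `[a, b], continuous f}.
Proof.
by move=> fc; apply: continuous_in_subspaceT => u; rewrite inE /= in_itv /= => /fc.
Qed.

Lemma EVT_ubound (f : R -> R) (a b : R) : a <= b ->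
  (forall u, a <= u <= b -> {for u, continuous f}) ->
  exists M, forall u, a <= u <= b -> f u <= M.
Proof.
move=> ab /within_segment_continuous fc; have [c _ fc_max] := EVT_max ab fc.
by exists (f c) => u uab; apply: fc_max; rewrite in_itv.
Qed.

Lemma MVT_segment_is_derive (f df : R -> R) (a b : R) : a <= b ->
  (forall u, a <= u <= b -> is_derive u 1 f (df u)) ->
  exists2 c, a <= c <= b & f b - f a = df c * (b - a).
Proof.
move=> ab fd.
have [||c + ->] := @MVT_segment _ f df a b ab.
- by move=> u; rewrite in_itv /= => /andP[au ub]; apply: fd; rewrite !ltW.
- apply: within_segment_continuous => u /fd [].
  by move/derivable1_diffP/differentiable_continuous.
by rewrite in_itv /=; exists c.
Qed.

Lemma is_derive_le0_nincr (f df : R -> R) (a : R) :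
  (forall t, a < t -> is_derive t 1 f (df t)) -> (forall t, a < t -> df t <= 0) ->
  forall u v, a < u -> u <= v -> f v <= f u.
Proof.
move=> fd df_le0 u v au uv.
have [c /andP[uc _] E] :=
  MVT_segment_is_derive uv (fun s hs => fd s (lt_le_trans au (andP hs).1)).
by rewrite -subr_le0 E mulr_le0_ge0 ?subr_ge0 // df_le0 // (lt_le_trans au).
Qed.

Lemma is_derive_ge0_ndecr (f df : R -> R) (a : R) :
  (forall t, a < t -> is_derive t 1 f (df t)) -> (forall t, a < t -> 0 <= df t) ->
  forall u v, a < u -> u <= v -> f u <= f v.
Proof.
move=> fd df_ge0 u v au uv; rewrite -lerN2.
apply: (is_derive_le0_nincr (f := fun t => - f t) (df := fun t => - df t) (a := a)) => // t at_.
- exact/is_deriveN/fd.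
- by rewrite oppr_le0 df_ge0.
Qed.

(* Integrating factor: (g w)' = (g' + k g) w when w' = k w. *)
Lemma is_derive_weighted_nincr (g dg w k : R -> R) (a : R) :
  (forall t, a < t -> is_derive t 1 g (dg t)) ->
  (forall t, a < t -> is_derive t 1 w (k t * w t)) ->
  (forall t, a < t -> 0 < w t) ->
  (forall t, a < t -> dg t + k t * g t <= 0) ->
  forall u v, a < u -> u <= v -> g v * w v <= g u * w u.
Proof.
move=> gd wd w_gt0 dg_le.
apply: (is_derive_le0_nincr (df := fun t => (dg t + k t * g t) * w t)) => t at_.
- apply: is_derive_eq; first exact: is_deriveM (gd t at_) (wd t at_).
  by rewrite /GRing.scale /=; ring.
- by rewrite mulr_le0_ge0 // ?dg_le // ltW // w_gt0.
Qed.

Lemma is_derive_Rintegral (g : R -> R) (a t : R) :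
  {within `[a, +oo[, continuous g} -> a < t ->
  is_derive t 1 (fun s => Rintegral lebesgue_measure `[a, s] g) (g t).
Proof.
move=> cg at_.
have tt1 : t < t + 1 by rewrite ltrDl.
have g_int : lebesgue_measure.-integrable `[a, t + 1] (EFin \o g).
  apply: continuous_compact_integrable; first exact: segment_compact.
  by apply: continuous_subspaceW cg; apply: subset_itvl; rewrite bnd_simp.
have cgt : {for t, continuous g}.
  by have [+ _] := (continuous_within_itvcyP a g).1 cg; apply; rewrite in_itv /= andbT.
have [dF F'] := continuous_FTC1_closed tt1 g_int at_ cgt.
by split; rewrite // -derive1E.
Qed.

Lemma is_derive_expR_Rintegral (g : R -> R) (a t : R) :
  {within `[a, +oo[, continuous g} -> a < t ->
  is_derive t 1 (fun s => expR (Rintegral lebesgue_measure `[a, s] g))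
    (g t * expR (Rintegral lebesgue_measure `[a, t] g)).
Proof.
move=> cg at_; apply: is_derive_eq; last by rewrite mulrC.
exact/is_derive1_comp/is_derive_Rintegral.
Qed.

End RealCalculus.

Section InnerProductCalculus.
Variables (R : realType) (V : normedModType R) (ip : V -> V -> R).
Hypothesis hip : is_inner_product ip.

Lemma ip_cvg (T : Type) (F : set_system T) (FF : Filter F) (u v : T -> V) a c :
  u @ F --> a -> v @ F --> c -> (fun s => ip (u s) (v s)) @ F --> ip a c.
Proof.
move=> ua vc; under eq_fun => s do rewrite (ip_polarization hip) !expr2.
rewrite (ip_polarization hip) !expr2.
by apply: cvgM; [apply: cvgB; apply: cvgM; apply: cvg_norm;
  solve [exact: cvgD | exact: cvgB] | exact: cvg_cst].
Qed.

Lemma is_derive_ip (u v : R -> V) (t : R) (du dv : V) :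
  is_derive t 1 u du -> is_derive t 1 v dv ->
  is_derive t 1 (fun s => ip (u s) (v s)) (ip du (v t) + ip (u t) dv).
Proof.
move=> ud vd; apply/is_deriveP.
have -> : (fun h => h^-1 *: (ip (u (t + h)) (v (t + h)) - ip (u t) (v t))) =
    (fun h => ip (h^-1 *: (u (t + h) - u t)) (v (t + h)) +
              ip (u t) (h^-1 *: (v (t + h) - v t))).
  apply/funext => h.
  by rewrite (ipZl hip) (ipZr hip) (ipBl hip) (ipBr hip) /GRing.scale /=; ring.
apply: cvgD; apply: ip_cvg; try exact/is_deriveP.
- by apply/continuous_at_shift/differentiable_continuous/derivable1_diffP; case: vd.
- exact: cvg_cst.
Qed.

Lemma is_derive_sqr_norm (u : R -> V) (t : R) (du : V) :
  is_derive t 1 u du -> is_derive t 1 (fun s => `|u s| ^+ 2) (2 * ip du (u t)).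
Proof.
move=> ud; under eq_fun => s do rewrite -(ipvv hip).
by apply: is_derive_eq; [exact: (is_derive_ip ud ud) | rewrite (ipC hip (u t)); ring].
Qed.

Lemma MVT_sqr_norm (u du : R -> V) (a b : R) : a <= b ->
  (forall s, a <= s <= b -> is_derive s 1 u (du s)) ->
  exists2 c, a <= c <= b & `|u b - u a| ^+ 2 <= (b - a) ^+ 2 * `|du c| ^+ 2.
Proof.
move=> ab ud; set w := u b - u a.
have wd s : a <= s <= b -> is_derive s 1 (fun s => ip (u s) w) (ip (du s) w).
  move=> sab; apply: is_derive_eq.
    exact: (is_derive_ip (ud s sab) (is_derive_cst w s 1)).
  by rewrite (ipC hip (u s)) (ip0l hip) addr0.
have [c cab E] := MVT_segment_is_derive ab wd.
exists c => //.
have ww : `|w| ^+ 2 = ip ((b - a) *: du c) w.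
  by rewrite -(ipvv hip) {1}/w (ipBl hip) E (ipZl hip) mulrC.
have := ip_le_sqr_norm hip ((b - a) *: du c) w.
by rewrite -ww normrZ exprMn real_normK ?num_real //; lra.
Qed.

End InnerProductCalculus.

Section ProductSqNorm.
Variables (R : realType) (X Y : normedModType R).
Variables (ipX : X -> X -> R) (ipY : Y -> Y -> R).
Hypothesis hipX : is_inner_product ipX.
Hypothesis hipY : is_inner_product ipY.

Lemma sqnorm2_ge0 (u : X) (v : Y) : 0 <= sqnorm2 u v.
Proof. by rewrite addr_ge0 // sqr_ge0. Qed.

Lemma sqnorm2N (u : X) (v : Y) : sqnorm2 (- u) (- v) = sqnorm2 u v.
Proof. by rewrite /sqnorm2 !normrN. Qed.

Lemma sqnorm2Z (e : R) (u : X) (v : Y) :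
  sqnorm2 (e *: u) (e *: v) = e ^+ 2 * sqnorm2 u v.
Proof. by rewrite /sqnorm2 !normrZ !exprMn real_normK ?num_real // mulrDr. Qed.

Lemma sqnorm2_cvg (T : Type) (F : set_system T) (FF : Filter F)
    (u : T -> X) (v : T -> Y) a c :
  u @ F --> a -> v @ F --> c -> (fun s => sqnorm2 (u s) (v s)) @ F --> sqnorm2 a c.
Proof.
by move=> ua vc; apply: cvgD; rewrite !expr2; apply: cvgM; apply: cvg_norm.
Qed.

Lemma sqnorm2D_le (u u' : X) (v v' : Y) :
  sqnorm2 (u + u') (v + v') <= 2 * sqnorm2 u v + 2 * sqnorm2 u' v'.
Proof.
by have := sqr_normD_le hipX u u'; have := sqr_normD_le hipY v v'; rewrite /sqnorm2; lra.
Qed.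

Lemma is_derive_sqnorm2 (u : R -> X) (v : R -> Y) (t : R) (du : X) (dv : Y) :
  is_derive t 1 u du -> is_derive t 1 v dv ->
  is_derive t 1 (fun s => sqnorm2 (u s) (v s)) (2 * (ipX du (u t) + ipY dv (v t))).
Proof.
move=> ud vd; rewrite mulrDr.
exact: is_deriveD (is_derive_sqr_norm hipX ud) (is_derive_sqr_norm hipY vd).
Qed.

End ProductSqNorm.

Section ConvexGradient.
Variables (R : realType) (X : normedModType R) (ipX : X -> X -> R).
Variables (f : X -> R) (gf : X -> X).
Hypothesis hipX : is_inner_product ipX.
Hypothesis f_diff : forall u : X, differentiable f u.
Hypothesis f_grad : forall u v : X, 'd f u v = ipX (gf u) v.

Lemma directional_cvg (u w : X) :
  (fun a : R => a^-1 * (f (u + a *: w) - f u)) @ 0^'+ --> ipX (gf u) w.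
Proof.
apply: cvg_dnbhs_at_right.
have fd : derivable f u w by apply: diff_derivable.
rewrite -f_grad -deriveE //.
have -> : (fun a : R => a^-1 * (f (u + a *: w) - f u)) =
          (fun a => a^-1 *: ((f \o shift u) (a *: w) - f u)).
  by apply/funext => a /=; rewrite [u + _]addrC.
exact: fd.
Qed.

Lemma ip_grad_le (u w : X) (K : R) :
  (forall a : R, 0 < a <= 1 -> f (u + a *: w) - f u <= a * K) -> ipX (gf u) w <= K.
Proof.
move=> H; apply: (cvgr_to_le (directional_cvg (u:=u) (w:=w))); near=> a.
have a0 : 0 < a by near: a; exact: nbhs_right_gt.
have a1 : a <= 1 by near: a; apply: nbhs_right_le; exact: ltr01.
by rewrite ler_pdivrMl // H // a0 a1.
Unshelve. all: by end_near. Qed.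

Lemma ip_grad_ge (u w : X) (K : R) :
  (forall a : R, 0 < a <= 1 -> a * K <= f (u + a *: w) - f u) -> K <= ipX (gf u) w.
Proof.
move=> H; apply: (cvgr_to_ge (directional_cvg (u:=u) (w:=w))); near=> a.
have a0 : 0 < a by near: a; exact: nbhs_right_gt.
have a1 : a <= 1 by near: a; apply: nbhs_right_le; exact: ltr01.
by rewrite ler_pdivlMl // H // a0 a1.
Unshelve. all: by end_near. Qed.

Hypothesis f_convex : forall (u v : X) (a : R), 0 <= a <= 1 ->
  f (a *: u + (1 - a) *: v) <= a * f u + (1 - a) * f v.

Lemma convex_grad_le (u v : X) : ipX (gf u) (v - u) <= f v - f u.
Proof.
apply: ip_grad_le => a /andP[a0 a1].
have a01 : 0 <= a <= 1 by rewrite ltW.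
have := f_convex v u a01.
rewrite (_ : a *: v + (1 - a) *: u = u + a *: (v - u)); first lra.
by rewrite scalerBl scale1r scalerBr addrCA.
Qed.

Lemma grad_monotone (u v : X) : 0 <= ipX (gf u - gf v) (u - v).
Proof.
have := convex_grad_le u v; have := convex_grad_le v u.
by rewrite (ipBl hipX) !(ipBr hipX); lra.
Qed.

End ConvexGradient.

Lemma sqr_norm_le0 (R : realType) (V : normedModType R) (v : V) : `|v| ^+ 2 <= 0 -> v = 0.
Proof.
by move=> v0; apply/eqP; rewrite -normr_eq0 -sqrf_eq0 eq_le v0 sqr_ge0.
Qed.

Section SaddlePoint.
Variables (R : realType) (X Y : normedModType R).
Variables (ipX : X -> X -> R) (ipY : Y -> Y -> R).
Variables (f : X -> R) (gf : X -> X) (A : {linear X -> Y}) (As : Y -> X) (b : Y).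
Hypothesis hipX : is_inner_product ipX.
Hypothesis hipY : is_inner_product ipY.
Hypothesis A_adj : forall (u : X) (w : Y), ipY (A u) w = ipX u (As w).
Hypothesis f_diff : forall u : X, differentiable f u.
Hypothesis f_grad : forall u v : X, 'd f u v = ipX (gf u) v.

Lemma saddle_point_T_zero xs ls : saddle_point (lagrangian ipY f A b) xs ls ->
  T1 gf As xs ls = 0 /\ T2 A b xs = 0.
Proof.
rewrite /T1 /T2 => sp.
have Axs : A xs = b.
  set w := A xs - b; have := (sp xs (ls + w)).1.
  rewrite /lagrangian -/w (ipDl hipY) (ipvv hipY) => h.
  by apply/eqP; rewrite -subr_eq0 -/w; apply/eqP/(sqr_norm_le0 (V := Y)); lra.
rewrite Axs subrr; split => //.
have grad_ge w : - ipX w (As ls) <= ipX (gf xs) w.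
  apply: (ip_grad_ge f_diff f_grad) => a /andP[a0 a1].
  have := (sp (xs + a *: w) ls).2.
  rewrite /lagrangian linearD linearZ /= Axs subrr addrAC subrr add0r.
  rewrite (ipZr hipY) [ipY ls (A w)](ipC hipY) A_adj [ipY ls 0](ipC hipY) (ip0l hipY).
  by rewrite mulrN; lra.
apply: (sqr_norm_le0 (V := X)); have := grad_ge (- (gf xs + As ls)).
rewrite (ipNl hipX) [ipX (gf xs) _](ipC hipX) (ipNl hipX) -(ipvv hipX).
by rewrite (ipDr hipX) [ipX _ (gf xs)](ipC hipX); lra.
Qed.

End SaddlePoint.

Definition aht_x (R : realType) (X Y : normedModType R) (gf : X -> X) (As : Y -> X)
  (e : R) (u : X) (w : Y) : X := - T1 gf As u w - e *: u.
Definition aht_l (R : realType) (X Y : normedModType R) (A : X -> Y) (b : Y)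
  (e : R) (u : X) (w : Y) : Y := - T2 A b u - e *: w.

Section AHTField.
Variables (R : realType) (X Y : normedModType R).
Variables (ipX : X -> X -> R) (ipY : Y -> Y -> R).
Variables (gf : X -> X) (A : {linear X -> Y}) (As : Y -> X) (b : Y).
Hypothesis hipX : is_inner_product ipX.
Hypothesis hipY : is_inner_product ipY.
Hypothesis A_adj : forall (u : X) (w : Y), ipY (A u) w = ipX u (As w).
Hypothesis gf_mono : forall u v, 0 <= ipX (gf u - gf v) (u - v).

Lemma T_monotone xa la xc lc :
  0 <= ipX (T1 gf As xa la - T1 gf As xc lc) (xa - xc)
       + ipY (T2 A b xa - T2 A b xc) (la - lc).
Proof.
have skew : ipX (As la - As lc) (xa - xc) + ipY (T2 A b xa - T2 A b xc) (la - lc) = 0.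
  rewrite /T2 opprB addrAC addrCA subrr addr0 -linearB (ipC hipX) A_adj.
  by rewrite (ipBr hipX) -!A_adj -[xc - xa]opprB linearN (ipNl hipY) (ipBr hipY); lra.
by rewrite /T1 opprD addrACA (ipDl hipX) -addrA skew addr0 gf_mono.
Qed.

Lemma aht_dissipative al be xa la xc lc :
  ipX (aht_x gf As al xa la - aht_x gf As be xc lc) (xa - xc)
  + ipY (aht_l A b al xa la - aht_l A b be xc lc) (la - lc)
  <= - ((al + be) / 2) * sqnorm2 (xa - xc) (la - lc)
     - ((al - be) / 2) * (sqnorm2 xa la - sqnorm2 xc lc).
Proof.
have split_diff (V : zmodType) (p q s t : V) : (- p - s) - (- q - t) = - (p - q) - (s - t).
  by rewrite !opprD !opprK addrACA.
rewrite /aht_x /aht_l !split_diff (ipBl hipX (- _)) (ipBl hipY (- _)) (ipNl hipX) (ipNl hipY).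
rewrite !(ip_scale_diff hipX) !(ip_scale_diff hipY) /sqnorm2.
have := T_monotone xa la xc lc; lra.
Qed.

Section AtZero.
Variables (xs : X) (ls : Y).
Hypothesis T1_zero : T1 gf As xs ls = 0.
Hypothesis T2_zero : T2 A b xs = 0.

Lemma aht_zero : aht_x gf As 0 xs ls = 0 /\ aht_l A b 0 xs ls = 0.
Proof. by rewrite /aht_x /aht_l T1_zero T2_zero !scale0r !oppr0 !addr0. Qed.

Lemma aht_dissipative_zero e u w : 0 <= e ->
  ipX (aht_x gf As e u w) (u - xs) + ipY (aht_l A b e u w) (w - ls)
  <= - (e / 2) * (sqnorm2 (u - xs) (w - ls) - sqnorm2 xs ls).
Proof.
move=> e0; have [zx zl] := aht_zero.
have := aht_dissipative e 0 u w xs ls; rewrite zx zl !subr0 addr0.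
by have := mulr_ge0 e0 (sqnorm2_ge0 u w); lra.
Qed.

Lemma T_reg_zero_sqnorm2_le e u w : 0 < e ->
  T1 gf As u w + e *: u = 0 -> T2 A b u + e *: w = 0 ->
  sqnorm2 u w <= sqnorm2 xs ls.
Proof.
move=> e0 z1 z2; have [zx zl] := aht_zero.
have := aht_dissipative e 0 u w xs ls.
rewrite zx zl /aht_x /aht_l -!opprD z1 z2 !subr0 !addr0 !oppr0 (ip0l hipX) (ip0l hipY) addr0.
by have := mulr_ge0 (ltW e0) (sqnorm2_ge0 (u - xs) (w - ls)); nra.
Qed.

End AtZero.

End AHTField.

Section Trajectory.
Variables (R : realType) (X Y : normedModType R).
Variables (ipX : X -> X -> R) (ipY : Y -> Y -> R).
Variables (gf : X -> X) (A : {linear X -> Y}) (As : Y -> X) (b : Y).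
Hypothesis hipX : is_inner_product ipX.
Hypothesis hipY : is_inner_product ipY.
Hypothesis A_adj : forall (u : X) (w : Y), ipY (A u) w = ipX u (As w).
Hypothesis gf_mono : forall u v, 0 <= ipX (gf u - gf v) (u - v).

Variables (eps : R -> R) (t0 tp : R).
Hypothesis eps_gt0 : forall t, t0 <= t -> 0 < eps t.
Hypothesis eps_derivable : forall t, t0 < t -> derivable eps t 1.
Hypothesis eps'_derivable : forall t, t0 < t -> derivable (derive1 eps) t 1.
Hypothesis t0_le_tp : t0 <= tp.
Hypothesis eps_tail : forall t, tp < t ->
  0 <= eps t ^+ 2 + derive1 eps t /\ 2 * eps t * derive1 eps t + derive1n 2 eps t <= 0.

Variables (x : R -> X) (l : R -> Y) (xs : X) (ls : Y) (xt : R -> X) (lt : R -> Y).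
Hypothesis x_derivable : forall t, t0 < t -> derivable x t 1.
Hypothesis l_derivable : forall t, t0 < t -> derivable l t 1.
Hypothesis x'_cont : forall t, t0 < t -> {for t, continuous (derive1 x)}.
Hypothesis l'_cont : forall t, t0 < t -> {for t, continuous (derive1 l)}.
Hypothesis ode_x : forall t, t0 < t -> derive1 x t = aht_x gf As (eps t) (x t) (l t).
Hypothesis ode_l : forall t, t0 < t -> derive1 l t = aht_l A b (eps t) (x t) (l t).
Hypothesis T1_zero : T1 gf As xs ls = 0.
Hypothesis T2_zero : T2 A b xs = 0.
Hypothesis reg_zero : forall t, t0 <= t ->
  T1 gf As (xt t) (lt t) + eps t *: xt t = 0 /\ T2 A b (xt t) + eps t *: lt t = 0.

Let is_derive_x t (t0t : t0 < t) := derivable1_is_derive (x_derivable t0t).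
Let is_derive_l t (t0t : t0 < t) := derivable1_is_derive (l_derivable t0t).
Let is_derive_eps t (t0t : t0 < t) := derivable1_is_derive (eps_derivable t0t).
Let is_derive_eps' t (t0t : t0 < t) := derivable1_is_derive (eps'_derivable t0t).

Variable P : R -> R.
Hypothesis P_gt0 : forall t, 0 < P t.
Hypothesis is_derive_P : forall t, t0 < t -> is_derive t 1 P (eps t * P t).

Lemma P_ndecr u v : t0 < u -> u <= v -> P u <= P v.
Proof.
apply: (is_derive_ge0_ndecr is_derive_P) => t t0t.
by rewrite mulr_ge0 // ltW // ?P_gt0 // eps_gt0 // ltW.
Qed.

Let c := sqnorm2 xs ls.
Let N t := sqnorm2 (x t) (l t).
Let r t := sqnorm2 (x t - xs) (l t - ls).
Let t1 := tp + 1.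

Lemma tp_lt_t1 : tp < t1. Proof. by rewrite /t1 ltrDl. Qed.

Lemma t0_lt_t1 : t0 < t1. Proof. exact: le_lt_trans t0_le_tp tp_lt_t1. Qed.

Lemma r_bounded t : t1 <= t -> r t <= r t1 + c.
Proof.
move=> t1t.
pose dr s := 2 * (ipX (derive1 x s) (x s - xs) + ipY (derive1 l s) (l s - ls)).
have rd s : t0 < s -> is_derive s 1 (fun s => r s - c) (dr s).
  move=> t0s; rewrite -[dr s]subr0; apply: is_deriveB; rewrite /dr.
  have -> : ipX (derive1 x s) (x s - xs) + ipY (derive1 l s) (l s - ls) =
            ipX (derive1 x s - 0) (x s - xs) + ipY (derive1 l s - 0) (l s - ls).
    by rewrite !subr0.
  apply: is_derive_sqnorm2 => //; apply: is_deriveB => //.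
  - exact: is_derive_x.
  - exact: is_derive_l.
have decay s : t0 < s -> dr s + eps s * (r s - c) <= 0.
  move=> t0s; have e0 : 0 <= eps s by rewrite ltW // eps_gt0 // ltW.
  have := aht_dissipative_zero hipX hipY A_adj gf_mono T1_zero T2_zero (x s) (l s) e0.
  by rewrite /dr /r /c -ode_x // -ode_l //; lra.
have := is_derive_weighted_nincr rd is_derive_P (fun s _ => P_gt0 s) decay
  t0_lt_t1 t1t.
have := P_ndecr t0_lt_t1 t1t; have := P_gt0 t1.
have := sqnorm2_ge0 (x t1 - xs) (l t1 - ls); have := sqnorm2_ge0 xs ls.
rewrite -/c -/(r t1); nra.
Qed.

Let B := 2 * (r t1 + c) + 2 * c.

Lemma B_ge0 : 0 <= B.
Proof. by rewrite /B !(addr_ge0, mulr_ge0) // sqnorm2_ge0. Qed.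

Lemma N_bounded t : t1 <= t -> N t <= B.
Proof.
move=> t1t; have := r_bounded t1t.
have := sqnorm2D_le hipX hipY (x t - xs) xs (l t - ls) ls.
by rewrite !subrK /B /r /N /c; lra.
Qed.

Lemma reg_zero_bounded t : t0 <= t -> sqnorm2 (xt t) (lt t) <= c.
Proof.
move=> t0t; have [z1 z2] := reg_zero t0t.
exact: (T_reg_zero_sqnorm2_le hipX hipY A_adj gf_mono T1_zero T2_zero (eps_gt0 t0t) z1 z2).
Qed.

Lemma eps_tail_nincr u v : tp < u -> u <= v ->
  derive1 eps v + eps v ^+ 2 <= derive1 eps u + eps u ^+ 2.
Proof.
apply: (is_derive_le0_nincr (f := fun s => derive1 eps s + eps s ^+ 2) (a := tp)
  (df := fun s => derive1n 2 eps s + 2 * eps s * derive1 eps s)).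
- move=> s tps; have t0s : t0 < s by apply: le_lt_trans tps.
  apply: is_derive_eq.
    exact: is_deriveD (is_derive_eps' t0s) (is_deriveX 2 (is_derive_eps t0s)).
  by rewrite derive1nS derive1n1 /GRing.scale /=; ring.
- by move=> s /eps_tail[_ ?]; lra.
Qed.

Lemma Peps_ndecr u v : tp < u -> u <= v -> P u * eps u <= P v * eps v.
Proof.
apply: (is_derive_ge0_ndecr (f := fun s => P s * eps s) (a := tp)
  (df := fun s => P s * (eps s ^+ 2 + derive1 eps s))).
- move=> s tps; have t0s : t0 < s by apply: le_lt_trans tps.
  apply: is_derive_eq; first exact: is_deriveM (is_derive_P t0s) (is_derive_eps t0s).
  by rewrite /GRing.scale /=; ring.
- by move=> s /eps_tail[? _]; rewrite mulr_ge0 // ltW // P_gt0.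
Qed.

Lemma is_derive_N t : t0 < t ->
  is_derive t 1 N (2 * (ipX (derive1 x t) (x t) + ipY (derive1 l t) (l t))).
Proof.
by move=> t0t; apply: (is_derive_sqnorm2 hipX hipY); [exact: is_derive_x | exact: is_derive_l].
Qed.

Let s0 := t1 + 1.

Lemma t1_lt_s0 : t1 < s0. Proof. by rewrite /s0 ltrDl. Qed.

Section Increments.
Variable Q : R -> R.
Hypothesis is_derive_Q : forall t, t1 < t -> is_derive t 1 Q (N t).

Lemma Q_increment h t : 0 < h -> t1 < t -> 0 <= Q (t + h) - Q t <= h * B.
Proof.
move=> h0 t1t; have tth : t <= t + h by rewrite lerDl ltW.
have [|s /andP[ts _] ->] := MVT_segment_is_derive (f := Q) (df := N) tth.
  by move=> s /andP[ts _]; apply: is_derive_Q; apply: lt_le_trans ts.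
rewrite addrC addKr mulrC pmulr_rge0 // sqnorm2_ge0 /=.
by rewrite ler_pM2l // N_bounded // ltW // (lt_le_trans t1t).
Qed.

Let E h t := sqnorm2 (x (t + h) - x t) (l (t + h) - l t)
             + (eps (t + h) - eps t) * (Q (t + h) - Q t).

Let dE h t := 2 * (ipX (derive1 x (t + h) - derive1 x t) (x (t + h) - x t)
                   + ipY (derive1 l (t + h) - derive1 l t) (l (t + h) - l t))
              + ((derive1 eps (t + h) - derive1 eps t) * (Q (t + h) - Q t)
                 + (eps (t + h) - eps t) * (N (t + h) - N t)).

Lemma is_derive_E h : 0 < h -> forall t, t1 < t -> is_derive t 1 (E h) (dE h t).
Proof.
move=> h0 t t1t; have t0t := lt_trans t0_lt_t1 t1t.
have t1th : t1 < t + h by rewrite (lt_le_trans t1t) // lerDl ltW.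
have t0th := lt_trans t0_lt_t1 t1th.
have dx := is_deriveB (is_derive_translate (is_derive_x t0th)) (is_derive_x t0t).
have dl := is_deriveB (is_derive_translate (is_derive_l t0th)) (is_derive_l t0t).
have de := is_deriveB (is_derive_translate (is_derive_eps t0th)) (is_derive_eps t0t).
have dQ := is_deriveB (is_derive_translate (is_derive_Q t1th)) (is_derive_Q t1t).
apply: is_derive_eq.
  exact: is_deriveD (is_derive_sqnorm2 hipX hipY dx dl) (is_deriveM de dQ).
by rewrite /dE /GRing.scale /= !fctE; ring.
Qed.

Let W h t := P t * P (t + h).

Lemma E_weighted_nincr h u v : 0 < h -> t1 < u -> u <= v -> E h v * W h v <= E h u * W h u.
Proof.
move=> h0 t1u uv.
apply: (is_derive_weighted_nincr (k := fun s => eps s + eps (s + h))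
  (is_derive_E h0) _ _ _ t1u uv) => s t1s.
- have t0s := lt_trans t0_lt_t1 t1s.
  have t0sh : t0 < s + h by rewrite (lt_le_trans t0s) // lerDl ltW.
  apply: is_derive_eq.
    exact: is_deriveM (is_derive_P t0s) (is_derive_translate (is_derive_P t0sh)).
  by rewrite /W /GRing.scale /=; ring.
- by rewrite /W mulr_gt0 ?P_gt0.
have t0s := lt_trans t0_lt_t1 t1s.
have t0sh : t0 < s + h by rewrite (lt_le_trans t0s) // lerDl ltW.
have tps := lt_trans tp_lt_t1 t1s.
have [Q0 _] := andP (Q_increment h0 t1s).
have ssh : s <= s + h by rewrite lerDl ltW.
have := eps_tail_nincr tps ssh; rewrite -subr_le0 => /(mulr_ge0_le0 Q0).
have := aht_dissipative b hipX hipY A_adj gf_mono (eps (s + h)) (eps s)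
  (x (s + h)) (l (s + h)) (x s) (l s).
by rewrite -!ode_x // -!ode_l // /dE /E /N; lra.
Qed.

Lemma derivatives_bounded_near_s0 : exists M, forall u, s0 <= u <= s0 + 1 ->
  [/\ `|derive1 x u| ^+ 2 <= M, `|derive1 l u| ^+ 2 <= M & `|derive1 eps u| <= M].
Proof.
have t0s0 := lt_trans t0_lt_t1 t1_lt_s0.
have [M hM] : exists M, forall u, s0 <= u <= s0 + 1 ->
    `|derive1 x u| ^+ 2 + `|derive1 l u| ^+ 2 + `|derive1 eps u| <= M.
  apply: EVT_ubound => [|u /andP[s0u _]]; first by rewrite lerDl.
  have t0u := lt_le_trans t0s0 s0u.
  apply: cvgD; first exact: sqnorm2_cvg (x'_cont t0u) (l'_cont t0u).
  apply: cvg_norm.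
  by have [/derivable1_diffP/differentiable_continuous] := is_derive_eps' t0u.
exists M => u /hM; have := normr_ge0 (derive1 eps u).
by have := sqr_ge0 `|derive1 x u|; have := sqr_ge0 `|derive1 l u|; split; lra.
Qed.

Lemma E_init : exists2 C, 0 <= C & forall h, 0 < h <= 1 -> E h s0 <= h ^+ 2 * C.
Proof.
have [M hM] := derivatives_bounded_near_s0.
have s0_in : s0 <= s0 <= s0 + 1 by rewrite lexx lerDl ler01.
have [_ _ /(le_trans (normr_ge0 _)) M0] := hM s0 s0_in.
exists (2 * M + M * B); first by rewrite addr_ge0 ?mulr_ge0 ?B_ge0.
move=> h /andP[h0 h1].
have s0h : s0 <= s0 + h by rewrite lerDl ltW.
have near_s0 u : s0 <= u <= s0 + h -> s0 <= u <= s0 + 1.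
  by move=> /andP[-> /le_trans]; apply; rewrite lerD2l.
have deriv_on (V : normedModType R) (f : R -> V) :
    (forall u, t0 < u -> is_derive u 1 f (derive1 f u)) ->
    forall u, s0 <= u <= s0 + h -> is_derive u 1 f (derive1 f u).
  move=> fd u /andP[s0u _]; apply: fd.
  exact: lt_le_trans (lt_trans t0_lt_t1 t1_lt_s0) s0u.
have [cx /near_s0/hM[Mx _ _] Ex] := MVT_sqr_norm hipX s0h (deriv_on _ _ is_derive_x).
have [cl /near_s0/hM[_ Ml _] El] := MVT_sqr_norm hipY s0h (deriv_on _ _ is_derive_l).
have [ce /near_s0/hM[_ _ Me] Ee] := MVT_segment_is_derive s0h (deriv_on _ _ is_derive_eps).
have [Q0 QB] := andP (Q_increment h0 t1_lt_s0).
rewrite /E /sqnorm2 Ee [s0 + h - s0]addrC addKr in Ex El *.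
have h20 : 0 <= h ^+ 2 by rewrite sqr_ge0.
have := ler_wpM2l h20 Mx; have := ler_wpM2l h20 Ml.
have : derive1 eps ce * (Q (s0 + h) - Q s0) <= M * (h * B).
  apply: le_trans (ler_wpM2r Q0 (ler_norm _)) _.
  exact: ler_pM Me QB.
move=> /(ler_wpM2l (ltW h0)); rewrite expr2; lra.
Qed.

Lemma E_decay : exists K, forall h t, 0 < h <= 1 -> s0 <= t ->
  E h t <= h ^+ 2 * (K * eps t ^+ 2).
Proof.
have [C C0 EC] := E_init.
have t0s0 := lt_trans t0_lt_t1 t1_lt_s0.
have Pe0 : 0 < P s0 * eps s0 by rewrite mulr_gt0 ?P_gt0 ?eps_gt0 ?ltW.
exists (C * (P s0 * P (s0 + 1)) / (P s0 * eps s0) ^+ 2) => h t /andP[h0 h1] s0t.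
have t0t := lt_le_trans t0s0 s0t.
have decr := E_weighted_nincr h0 t1_lt_s0 s0t.
have W_s0 : W h s0 <= P s0 * P (s0 + 1).
  by rewrite ler_pM2l ?P_gt0 // P_ndecr // ?lerD2l // (lt_trans t0s0) // ltrDl.
have W_t : P t ^+ 2 <= W h t.
  by rewrite expr2 ler_pM2l ?P_gt0 // P_ndecr // lerDl ltW.
have Peps := Peps_ndecr (lt_trans tp_lt_t1 t1_lt_s0) s0t.
(* E_h(t) P(t)^2 <= E_h(t) W_h(t) <= E_h(s0) W_h(s0), and P(s0) eps(s0) <= P(t) eps(t). *)
have key : E h t * (P s0 * eps s0) ^+ 2 <=
           h ^+ 2 * (C * (P s0 * P (s0 + 1)) * eps t ^+ 2).
  have PP : 0 <= C * (P s0 * P (s0 + 1)) by rewrite mulr_ge0 // mulr_ge0 // ltW // P_gt0.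
  have [Ele0|Egt0] := lerP (E h t) 0.
    apply: (@le_trans _ _ 0); first by rewrite mulr_le0_ge0 // sqr_ge0.
    by rewrite mulr_ge0 ?sqr_ge0 // mulr_ge0 // sqr_ge0.
  have sq : (P s0 * eps s0) ^+ 2 <= W h t * eps t ^+ 2.
    apply: (@le_trans _ _ ((P t * eps t) ^+ 2)).
      by rewrite !expr2; apply: ler_pM => //; exact: ltW.
    by rewrite exprMn; apply: ler_wpM2r; [exact: sqr_ge0 | exact: W_t].
  apply: le_trans (ler_wpM2l (ltW Egt0) sq) _.
  suff /(ler_wpM2r (sqr_ge0 (eps t))) : E h t * W h t <= h ^+ 2 * (C * (P s0 * P (s0 + 1))).
    by rewrite !mulrA.
  apply: le_trans decr _.
  have W0 : 0 < W h s0 by rewrite mulr_gt0 ?P_gt0.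
  apply: le_trans (ler_wpM2r (ltW W0) (EC h _)) _; first by rewrite h0 h1.
  by rewrite -mulrA; apply: ler_wpM2l; [exact: sqr_ge0 | exact: ler_wpM2l].
have -> : h ^+ 2 * (C * (P s0 * P (s0 + 1)) / (P s0 * eps s0) ^+ 2 * eps t ^+ 2) =
          h ^+ 2 * (C * (P s0 * P (s0 + 1)) * eps t ^+ 2) / (P s0 * eps s0) ^+ 2.
  by rewrite [_ / _ * _]mulrAC !mulrA.
by rewrite ler_pdivlMr // exprn_gt0.
Qed.

Lemma E_quotient_cvg t : t1 < t ->
  (fun h => E h t / h ^+ 2) @ 0^'+ -->
    sqnorm2 (derive1 x t) (derive1 l t) + derive1 eps t * N t.
Proof.
move=> t1t; have t0t := lt_trans t0_lt_t1 t1t.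
have -> : (fun h => E h t / h ^+ 2) =
    (fun h => sqnorm2 (h^-1 *: (x (t + h) - x t)) (h^-1 *: (l (t + h) - l t))
              + h^-1 *: (eps (t + h) - eps t) * (h^-1 *: (Q (t + h) - Q t))).
  (* also at h = 0, where both sides vanish since 0^-1 = 0 *)
  by apply/funext => h; rewrite sqnorm2Z /E /GRing.scale /= -exprVn; ring.
apply: cvg_dnbhs_at_right; apply: cvgD; last apply: cvgM.
- by apply: sqnorm2_cvg; apply/is_deriveP; [exact: is_derive_x | exact: is_derive_l].
- exact/is_deriveP/is_derive_eps.
- exact/is_deriveP/is_derive_Q.
Qed.

Lemma velocity_bound : exists K, forall t, s0 <= t ->
  sqnorm2 (derive1 x t) (derive1 l t) <= K * eps t ^+ 2.
Proof.
have [K EK] := E_decay.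
exists (K + B) => t s0t; have t1t := lt_le_trans t1_lt_s0 s0t.
have : sqnorm2 (derive1 x t) (derive1 l t) + derive1 eps t * N t <= K * eps t ^+ 2.
  apply: (cvgr_to_le (E_quotient_cvg t1t)); near=> h.
  have h0 : 0 < h by near: h; exact: nbhs_right_gt.
  have h1 : h <= 1 by near: h; apply: nbhs_right_le; exact: ltr01.
  by rewrite ler_pdivrMr ?exprn_gt0 // mulrC EK // h0 h1.
have [/(mulr_ge0 (sqnorm2_ge0 (x t) (l t))) tail _] := eps_tail (lt_trans tp_lt_t1 t1t).
have := N_bounded (ltW t1t); rewrite -subr_ge0 => /(mulr_ge0 (sqr_ge0 (eps t))).
rewrite /N; lra.
Unshelve. all: by end_near. Qed.

End Increments.

Lemma N_primitive t : t1 < t ->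
  is_derive t 1 (fun s => Rintegral lebesgue_measure `[t1, s] N) (N t).
Proof.
move=> t1t; apply: is_derive_Rintegral => //.
apply: continuous_in_subspaceT => s; rewrite inE /= in_itv /= andbT => t1s.
by have [/derivable1_diffP/differentiable_continuous] := is_derive_N (lt_le_trans t0_lt_t1 t1s).
Qed.

Lemma residual_bound : exists K, forall t, s0 <= t ->
  sqnorm2 (derive1 x t + eps t *: (x t - xt t)) (derive1 l t + eps t *: (l t - lt t))
  <= K * eps t ^+ 2.
Proof.
have [K vel] := velocity_bound N_primitive.
exists (2 * K + 4 * (B + c)) => t s0t.
have t1t := lt_le_trans t1_lt_s0 s0t; have t0t := lt_trans t0_lt_t1 t1t.
apply: le_trans (sqnorm2D_le hipX hipY _ _ _ _) _; rewrite sqnorm2Z.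
have := sqnorm2D_le hipX hipY (x t) (- xt t) (l t) (- lt t); rewrite sqnorm2N.
rewrite -subr_ge0 => /(mulr_ge0 (sqr_ge0 (eps t))).
have := N_bounded (ltW t1t); rewrite -subr_ge0 => /(mulr_ge0 (sqr_ge0 (eps t))).
have := reg_zero_bounded (ltW t0t); rewrite -subr_ge0 => /(mulr_ge0 (sqr_ge0 (eps t))).
have := vel t s0t; rewrite /N; lra.
Qed.

Lemma T_residual t : t0 < t ->
  T1 gf As (x t) (l t) - T1 gf As (xt t) (lt t) = - (derive1 x t + eps t *: (x t - xt t)) /\
  T2 A b (x t) - T2 A b (xt t) = - (derive1 l t + eps t *: (l t - lt t)).
Proof.
move=> t0t; have [/eqP + /eqP] := reg_zero (ltW t0t); rewrite !addr_eq0 => /eqP-> /eqP->.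
by rewrite ode_x // ode_l // /aht_x /aht_l !scalerBr !addrA !subrK !opprD !opprK.
Qed.

End Trajectory.

Lemma addr3_eq0 (V : zmodType) (d p q : V) : d + p + q = 0 -> d = - p - q.
Proof. by move=> /(canRL (addrK q)) /(canRL (addrK p)); rewrite sub0r addrC. Qed.

Lemma bigO_pinfty_sqr (R : realType) (f e g : R -> R) (K s : R) :
  (forall t, s <= t -> `|f t| <= K * e t ^+ 2) ->
  bigO_pinfty f (fun t => expR (g t) + e t ^+ 2).
Proof.
move=> fK; exists (Num.max K 0); near=> t.
have st : s <= t by near: t; apply: nbhs_pinfty_ge; exact: num_real.
have eg : 0 <= expR (g t) + e t ^+ 2 by rewrite addr_ge0 ?sqr_ge0 // ltW // expR_gt0.
rewrite [X in _ <= _ * X]ger0_norm //.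
apply: le_trans (fK t st) (@le_trans _ _ (Num.max K 0 * e t ^+ 2) _ _ _ _).
  by apply: ler_wpM2r; rewrite ?sqr_ge0 // le_max lexx.
by apply: ler_wpM2l; rewrite ?le_max ?lexx ?orbT // lerDr ltW // expR_gt0.
Unshelve. all: by end_near. Qed.

Unset Implicit Arguments.

Theorem theorem4p5
  (R : realType) (X Y : completeNormedModType R)
  (ipX : X -> X -> R) (ipY : Y -> Y -> R)
  (f : X -> R) (gf : X -> X) (A : {linear X -> Y}) (As : Y -> X) (b : Y)
  (eps : R -> R) (t0 : R)
  (x : R -> X) (l : R -> Y) (xt : R -> X) (lt : R -> Y) :
  (* X, Y real Hilbert spaces *)
  is_inner_product ipX -> is_inner_product ipY ->
  (* f convex *)
  (forall (u v : X) (a : R), 0 <= a <= 1 ->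
     f (a *: u + (1 - a) *: v) <= a * f u + (1 - a) * f v) ->
  (* f continuously (Frechet) differentiable, with gradient gf *)
  (forall u : X, differentiable f u) ->
  (forall u v : X, 'd f u v = ipX (gf u) v) ->
  continuous gf ->
  (* gf Lipschitz continuous on bounded sets *)
  (forall r : R, 0 < r -> exists L : R, forall u v : X,
     `|u| <= r -> `|v| <= r -> `|gf u - gf v| <= L * `|u - v|) ->
  (* A continuous linear, As its adjoint *)
  continuous A ->
  (forall (u : X) (w : Y), ipY (A u) w = ipX u (As w)) ->
  (* eps : [t0, +oo[ -> ]0, +oo[, C^2, vanishing at +oo *)
  0 <= t0 ->
  (forall t, t0 <= t -> 0 < eps t) ->
  {within `[t0, +oo[, continuous eps} ->
  (forall t, t0 < t -> derivable eps t 1 /\ derivable (derive1 eps) t 1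
                        /\ {for t, continuous (derive1n 2 eps)}) ->
  eps s @[s --> +oo] --> 0 ->
  (* S x M nonempty: L has a saddle point *)
  (exists (xs : X) (ls : Y), saddle_point (lagrangian ipY f A b) xs ls) ->
  (* (x, l) is a solution of (AHT) *)
  {within `[t0, +oo[, continuous x} -> {within `[t0, +oo[, continuous l} ->
  (forall t, t0 < t -> derivable x t 1 /\ derivable l t 1 /\
     {for t, continuous (derive1 x)} /\ {for t, continuous (derive1 l)}) ->
  (forall t, t0 < t ->
     derive1 x t + gf (x t) + As (l t) + eps t *: x t = 0 /\
     derive1 l t + b - A (x t) + eps t *: l t = 0) ->
  (* (xt t, lt t) is the zero of T + eps(t) id *)
  (forall t, t0 <= t ->
     T1 gf As (xt t) (lt t) + eps t *: xt t = 0 /\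
     T2 A b (xt t) + eps t *: lt t = 0) ->
  (* condition on eps beyond t_+ *)
  (exists tp, t0 <= tp /\ forall t, tp < t ->
     eps t ^+ 2 + derive1 eps t >= 0 /\
     2 * eps t * derive1 eps t + derive1n 2 eps t <= 0) ->
  let rho t := Rintegral lebesgue_measure `[t0, t] eps in
  bigO_pinfty (fun t => sqnorm2 (derive1 x t + eps t *: (x t - xt t))
                    (derive1 l t + eps t *: (l t - lt t)))
     (fun t => expR (- 2 * rho t) + eps t ^+ 2)
  /\
  bigO_pinfty (fun t => sqnorm2 (T1 gf As (x t) (l t) - T1 gf As (xt t) (lt t))
                    (T2 A b (x t) - T2 A b (xt t)))
     (fun t => expR (- 2 * rho t) + eps t ^+ 2).
Proof.
move=> hipX hipY f_convex f_diff f_grad _ _ _ A_adj _ eps_gt0 eps_cont eps_C2 _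
  [xs [ls saddle]] _ _ xl_C1 ode reg_zero [tp [t0_le_tp eps_tail]] rho.
have [T1_zero T2_zero] := saddle_point_T_zero hipX hipY A_adj f_diff f_grad saddle.
have gf_mono := grad_monotone hipX f_diff f_grad f_convex.
have ode_x t (t0t : t0 < t) : derive1 x t = aht_x gf As (eps t) (x t) (l t).
  by have [+ _] := ode t t0t; rewrite -[_ + gf _ + _]addrA => /addr3_eq0.
have ode_l t (t0t : t0 < t) : derive1 l t = aht_l A b (eps t) (x t) (l t).
  by have [_] := ode t t0t; rewrite -[_ + b + _]addrA => /addr3_eq0.
have eps_d t (t0t : t0 < t) := (eps_C2 t t0t).1.
have eps'_d t (t0t : t0 < t) := (eps_C2 t t0t).2.1.
have x_d t (t0t : t0 < t) := (xl_C1 t t0t).1.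
have l_d t (t0t : t0 < t) := (xl_C1 t t0t).2.1.
have x'_c t (t0t : t0 < t) := (xl_C1 t t0t).2.2.1.
have l'_c t (t0t : t0 < t) := (xl_C1 t t0t).2.2.2.
have P_d t (t0t : t0 < t) := is_derive_expR_Rintegral eps_cont t0t.
have [K bound] := residual_bound hipX hipY A_adj gf_mono eps_gt0 eps_d eps'_d t0_le_tp
  eps_tail x_d l_d x'_c l'_c ode_x ode_l T1_zero T2_zero reg_zero
  (fun t => expR_gt0 (rho t)) P_d.
split; apply: (@bigO_pinfty_sqr _ _ _ _ K (tp + 1 + 1)) => t st.
  by rewrite ger0_norm ?sqnorm2_ge0 // bound.
have t0t : t0 < t by apply: le_lt_trans t0_le_tp _; apply: lt_le_trans st; lra.
have [-> ->] := T_residual ode_x ode_l reg_zero t0t.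
by rewrite sqnorm2N ger0_norm ?sqnorm2_ge0 // bound.
Qed.
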